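(* Let $Q$ be a finite set of points in $\mathbb{R}^d$ with a partition $Q=\bigcup_{l=1}^jQ_l$ into pairwise disjoint nonempty sets. Let $o$ be the mean point of $Q$, $o_l$ the mean point of $Q_l$ ($1\le l\le j$), $\delta^2=\frac1{|Q|}\sum_{q\in Q}\|q-o\|^2$, and $\mathcal{V}$ the simplex (convex hull) determined by $\{o_1,\dots,o_j\}$. Then for any $0<\epsilon\le1$ one can construct, from the points $o_1,\dots,o_j$ and $\epsilon$ alone, a grid $G\subset\mathcal{V}$ of size $O((8j/\epsilon)^j)$ such that at least one grid point $\tau\in G$ satisfies $\|\tau-o\|\le\sqrt{\epsilon}\,\delta$.
   Context: The implied constant in $O((8j/\epsilon)^j)$ may depend on $j$ (in the paper $j\le k$ is a fixed constant). *)

From mathcomp Require Import all_boot all_order all_algebra.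
From mathcomp Require Export reals.
Set Implicit Arguments. Unset Strict Implicit. Unset Printing Implicit Defensive.
Import Order.TTheory GRing.Theory Num.Theory.
Local Open Scope ring_scope.

Definition enorm (R : realType) (d : nat) (v : 'rV[R]_d) : R :=
  Num.sqrt (\sum_(i < d) v 0 i ^+ 2).

Definition mean (R : realType) (d n : nat) (q : 'I_n -> 'rV[R]_d) : 'rV[R]_d :=
  (n%:R)^-1 *: \sum_(i < n) q i.

(* Mean point of the part Q_l = { q i | p i = l }. *)
Definition cluster_mean (R : realType) (d n j : nat)
    (q : 'I_n -> 'rV[R]_d) (p : 'I_n -> 'I_j) (l : 'I_j) : 'rV[R]_d :=
  (#|[set i | p i == l]|%:R)^-1 *: \sum_(i < n | p i == l) q i.

Definition variance (R : realType) (d n : nat) (q : 'I_n -> 'rV[R]_d) : R :=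
  (n%:R)^-1 * \sum_(i < n) enorm (q i - mean q) ^+ 2.

Definition in_hull (R : realType) (d j : nat) (o : 'I_j -> 'rV[R]_d) (x : 'rV[R]_d) : Prop :=
  exists lam : 'I_j -> R,
    (forall l, 0 <= lam l) /\ \sum_(l < j) lam l = 1 /\ x = \sum_(l < j) lam l *: o l.

From mathcomp Require Import all_boot all_order all_algebra.
From mathcomp Require Import reals.
From mathcomp Require Import ring lra.
Set Implicit Arguments.
Unset Strict Implicit.
Unset Printing Implicit Defensive.
Import Order.TTheory GRing.Theory Num.Theory.
Local Open Scope ring_scope.

(* The mean o is the convex combination of the cluster means o_l with weights
   w_l = |Q_l| / |Q|.  Rounding the weights to multiples of 1/N, N ~ j^2/eps
   (all of them down, except the largest one, which absorbs the deficit of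
   less than j), gives a grid point tau = sum_l lam_l o_l with
   j (lam_l - w_l)^2 <= eps w_l.  Since sum_l (lam_l - w_l) = 0, Cauchy-Schwarz
   yields ||tau - o||^2 <= j sum_l (lam_l - w_l)^2 ||o_l - o||^2
   <= eps sum_l w_l ||o_l - o||^2, and this between-cluster variance is at most
   the total variance delta^2.  The grid of all such points has at most
   (N + 1)^j elements. *)

Lemma sum_sqr_sub_mean (R : realDomainType) (I : finType) (A : {pred I})
    (y : I -> R) (m c : R) :
  \sum_(i in A) y i = #|A|%:R * m ->
  \sum_(i in A) (y i - c) ^+ 2 =
    \sum_(i in A) (y i - m) ^+ 2 + #|A|%:R * (m - c) ^+ 2.
Proof.
move=> sum_y.
have dev0 : \sum_(i in A) (y i - m) = 0.
  by rewrite sumrB sumr_const sum_y mulr_natl subrr.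
under eq_bigr do rewrite -[y _ - c](subrKA m) sqrrD.
by rewrite !big_split /= -mulr_suml dev0 mul0r !addr0 sumr_const mulr_natl.
Qed.

Lemma sqr_sum_le_card_sum_sqr (R : realFieldType) (I : finType) (F : I -> R) :
  (\sum_i F i) ^+ 2 <= #|I|%:R * \sum_i F i ^+ 2.
Proof.
have [I0|Ipos] := posnP #|I|.
  by rewrite I0 mul0r big1 ?expr0n // => i; have := fintype0 i.
have cI : #|I|%:R != 0 :> R by rewrite pnatr_eq0 -lt0n.
set m := (\sum_i F i) / #|I|%:R.
have sum_F : \sum_(i in I) F i = #|I|%:R * m by rewrite mulrC divfK.
have := sum_sqr_sub_mean 0 sum_F.
under eq_bigr do rewrite subr0.
move=> ->; rewrite subr0 mulrDr -[\sum_i F i](divfK cI) -/m.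
rewrite exprMn [X in _ <= _ + X]mulrA -expr2 mulrC lerDr.
by rewrite mulr_ge0 // sumr_ge0 // => i _; apply: sqr_ge0.
Qed.

Definition sqnorm (R : pzRingType) (d : nat) (v : 'rV[R]_d) : R :=
  \sum_(k < d) v 0 k ^+ 2.

Lemma sqnorm_ge0 (R : realDomainType) (d : nat) (v : 'rV[R]_d) : 0 <= sqnorm v.
Proof. by apply: sumr_ge0 => k _; apply: sqr_ge0. Qed.

Lemma sqnormZ (R : comPzRingType) (d : nat) (a : R) (v : 'rV[R]_d) :
  sqnorm (a *: v) = a ^+ 2 * sqnorm v.
Proof. by rewrite mulr_sumr; apply: eq_bigr => k _; rewrite mxE exprMn. Qed.

Lemma sqnorm_sum_le (R : realFieldType) (d : nat) (I : finType) (u : I -> 'rV[R]_d) :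
  sqnorm (\sum_l u l) <= #|I|%:R * \sum_l sqnorm (u l).
Proof.
rewrite /sqnorm exchange_big mulr_sumr /=; apply: ler_sum => k _.
by rewrite summxE sqr_sum_le_card_sum_sqr.
Qed.

Lemma card_sqnorm_sub_le (R : realDomainType) (d : nat) (I : finType) (A : {pred I})
    (y : I -> 'rV[R]_d) (m c : 'rV[R]_d) :
  \sum_(i in A) y i = #|A|%:R *: m ->
  #|A|%:R * sqnorm (m - c) <= \sum_(i in A) sqnorm (y i - c).
Proof.
move=> sum_y; rewrite /sqnorm exchange_big mulr_sumr /=; apply: ler_sum => k _.
have sum_yk : \sum_(i in A) y i 0 k = #|A|%:R * m 0 k.
  by rewrite -summxE sum_y mxE.
rewrite !mxE (eq_bigr (fun i => (y i 0 k - c 0 k) ^+ 2)) => [|i _];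
  last by rewrite !mxE.
rewrite (sum_sqr_sub_mean _ sum_yk) lerDr sumr_ge0 // => i _; exact: sqr_ge0.
Qed.

Lemma enorm_sqr (R : realType) (d : nat) (v : 'rV[R]_d) : enorm v ^+ 2 = sqnorm v.
Proof. by rewrite sqr_sqrtr // sqnorm_ge0. Qed.

Definition simplex_grid (R : fieldType) (V : lmodType R) (J : nat) (o : 'I_J -> V)
    (N : nat) : seq V :=
  [seq \sum_l ((f l : nat)%:R / N%:R) *: o l
     | f : {ffun 'I_J -> 'I_N.+1} <- enum {ffun 'I_J -> 'I_N.+1}
     & (\sum_l (f l : nat) == N)%N].

Lemma size_simplex_grid (R : fieldType) (V : lmodType R) (J N : nat) (o : 'I_J -> V) :
  (size (simplex_grid o N) <= N.+1 ^ J)%N.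
Proof.
rewrite size_map size_filter (leq_trans (count_size _ _)) //.
by rewrite -cardE card_ffun !card_ord.
Qed.

Lemma mem_simplex_grid (R : fieldType) (V : lmodType R) (J N : nat) (o : 'I_J -> V)
    (k : 'I_J -> nat) :
  (\sum_l k l)%N = N -> \sum_l ((k l)%:R / N%:R) *: o l \in simplex_grid o N.
Proof.
move=> sum_k.
have k_lt l : (k l < N.+1)%N by rewrite ltnS -sum_k (bigD1 l) //= leq_addr.
apply/mapP; exists [ffun l => Ordinal (k_lt l)].
  by rewrite mem_filter mem_enum andbT; under eq_bigr do rewrite ffunE; rewrite sum_k.
by apply: eq_bigr => l _; rewrite ffunE.
Qed.

Lemma simplex_grid_in_hull (R : realType) (d J N : nat) (o : 'I_J -> 'rV[R]_d) g :
  (0 < N)%N -> g \in simplex_grid o N -> in_hull o g.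
Proof.
move=> N_gt0 /mapP [f]; rewrite mem_filter => /andP [/eqP sum_f _] ->.
exists (fun l => (f l : nat)%:R / N%:R); split; [|split] => //.
- by move=> l; rewrite divr_ge0.
- by rewrite -mulr_suml -natr_sum sum_f divff // pnatr_eq0 -lt0n.
Qed.

Lemma sqr_sub_truncn_le (R : archiRealFieldType) (x : R) :
  0 <= x -> (x - (Num.truncn x)%:R) ^+ 2 <= x.
Proof.
move=> x_ge0; have /andP [tr_le tr_gt] := truncn_itv x_ge0.
have tr_ge0 : 0 <= (Num.truncn x)%:R :> R by rewrite ler0n.
rewrite -natr1 in tr_gt; nra.
Qed.

Lemma sqr_div_sub_le (R : realFieldType) (a b k N w : R) :
  0 < N -> a * (k - N * w) ^+ 2 <= b * N ^+ 2 -> a * (k / N - w) ^+ 2 <= b.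
Proof.
move=> N_gt0 le_ab.
have -> : k / N - w = (k - N * w) / N by field; rewrite gt_eqF.
by rewrite expr_div_n mulrA ler_pdivrMr ?exprn_gt0.
Qed.

Lemma rounding_err_le (R : realFieldType) (J N w e eps : R) :
  1 <= J -> 0 <= w -> J ^+ 2 <= eps * N -> e ^+ 2 <= N * w ->
  J * e ^+ 2 <= eps * w * N ^+ 2.
Proof.
move=> J_ge1 w_ge0 JN e_le.
have J_le : J <= eps * N.
  by apply: le_trans JN; rewrite expr2 ler_peMr // (le_trans ler01).
have : 0 <= e ^+ 2 := sqr_ge0 e.
have : 0 <= N * w by apply: le_trans e_le; exact: sqr_ge0.
nra.
Qed.

Lemma rounding_err_le_of_max (R : realFieldType) (J N w e eps : R) :
  1 <= J * w -> 0 <= e <= J -> J ^+ 2 <= N -> J ^+ 2 <= eps * N ->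
  J * e ^+ 2 <= eps * w * N ^+ 2.
Proof.
move=> Jw_ge1 /andP [e_ge0 e_le] JN JepsN.
have J_ge0 : 0 <= J := le_trans e_ge0 e_le.
have w_ge0 : 0 <= w by nra.
have e_sqr : e ^+ 2 <= J ^+ 2 by rewrite lerXn2r ?nnegrE.
have J_sqr_ge0 : 0 <= J ^+ 2 := sqr_ge0 _.
have le_J3 : J * e ^+ 2 <= J * J ^+ 2 by rewrite ler_wpM2l.
have J3_le : J * J ^+ 2 <= J ^+ 2 * J ^+ 2 * w.
  have : 0 <= J * J ^+ 2 by rewrite mulr_ge0.
  nra.
have J4_le : J ^+ 2 * J ^+ 2 <= eps * N * N by nra.
nra.
Qed.

Lemma sum_sub_truncn_itv (R : archiRealFieldType) (I : finType) (P : pred I)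
    (x : I -> R) :
  (forall i, 0 <= x i) ->
  0 <= \sum_(i | P i) (x i - (Num.truncn (x i))%:R) <= \sum_(i | P i) 1.
Proof.
move=> x_ge0; apply/andP; split.
  by apply: sumr_ge0 => i _; rewrite subr_ge0 truncn_le.
apply: ler_sum => i _; have /andP [_] := truncn_itv (x_ge0 i).
by rewrite -natr1; lra.
Qed.

Lemma simplex_rounding (R : archiRealFieldType) (J N : nat) (w : 'I_J -> R) (eps : R) :
  (forall l, 0 <= w l) -> \sum_l w l = 1 -> eps <= 1 -> J%:R ^+ 2 <= eps * N%:R ->
  exists2 k : 'I_J -> nat, (\sum_l k l)%N = N &
    forall l, J%:R * ((k l)%:R / N%:R - w l) ^+ 2 <= eps * w l.
Proof.
case: J w => [w _|J w w_ge0 sum_w eps_le1 JN].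
  by rewrite big_ord0 => /eqP; rewrite eq_sym oner_eq0.
set J1 : R := J.+1%:R; set Nr : R := N%:R.
have J1_ge1 : 1 <= J1 by rewrite ler1n.
have J1_le_N : J1 ^+ 2 <= Nr by have : 0 <= Nr := ler0n _ _; nra.
have N_gt0 : 0 < Nr.
  by apply: lt_le_trans J1_le_N; rewrite exprn_gt0 // (lt_le_trans ltr01).
have card_J1 : \sum_(l < J.+1) 1 = J1 by rewrite sumr_const card_ord.
pose m := [arg max_(i > ord0) w i]%O.
have Jwm_ge1 : 1 <= J1 * w m.
  rewrite -card_J1 mulr_suml -{1}sum_w; apply: ler_sum => l _.
  by rewrite mul1r /m; case: arg_maxP => // i _; apply.
have Nw_ge0 l : 0 <= Nr * w l by rewrite mulr_ge0 // ltW.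
have /andP [frac_ge0 frac_le] := sum_sub_truncn_itv (fun l => l != m) Nw_ge0.
have sum_Nw : \sum_(l | l != m) Nr * w l = Nr - Nr * w m.
  have : \sum_(l | l != m) w l = 1 - w m by move: sum_w; rewrite (bigD1 m) //=; lra.
  by rewrite -mulr_sumr => ->; rewrite mulrBr mulr1.
pose S := (\sum_(l | l != m) Num.truncn (Nr * w l))%N.
have S_le_N : (S <= N)%N.
  by rewrite -(ler_nat R) natr_sum -/Nr; move: frac_ge0; rewrite sumrB sum_Nw; nra.
pose k l := if l == m then (N - S)%N else Num.truncn (Nr * w l).
exists k.
  rewrite (bigD1 m) //= /k eqxx (eq_bigr (fun l => Num.truncn (Nr * w l))) ?subnK //.
  by move=> l /negbTE ->.
move=> l; apply: sqr_div_sub_le => //.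
have [->|l_neq_m] := eqVneq l m; last first.
  rewrite /k (negbTE l_neq_m) -sqrrN opprB.
  exact: rounding_err_le (w_ge0 l) JN (sqr_sub_truncn_le (Nw_ge0 l)).
apply: rounding_err_le_of_max => //.
have -> : (k m)%:R - Nr * w m =
    \sum_(l | l != m) (Nr * w l - (Num.truncn (Nr * w l))%:R).
  by rewrite /k eqxx natrB // natr_sum sumrB sum_Nw; ring.
move: card_J1; rewrite (bigD1 m) //= => card_J1.
by rewrite frac_ge0 (le_trans frac_le) //; lra.
Qed.

Section Clusters.
Variables (R : realType) (d n J : nat) (q : 'I_n -> 'rV[R]_d) (p : 'I_n -> 'I_J).

Definition cluster (l : 'I_J) : {set 'I_n} := [set i | p i == l].

Definition cluster_weight (l : 'I_J) : R := #|cluster l|%:R / n%:R.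

Lemma sum_over_clusters (V : nmodType) (F : 'I_n -> V) :
  \sum_i F i = \sum_l \sum_(i in cluster l) F i.
Proof.
rewrite (partition_big p xpredT) //; apply: eq_bigr => l _.
by apply: eq_bigl => i; rewrite inE.
Qed.

Lemma sum_cluster (l : 'I_J) :
  \sum_(i in cluster l) q i = #|cluster l|%:R *: cluster_mean q p l.
Proof.
rewrite /cluster_mean -/(cluster l) scalerA.
have [/card0_eq cl0|cl_neq0] := eqVneq #|cluster l| 0%N.
  by rewrite big_pred0 // (eq_card0 cl0) mul0r scale0r.
rewrite mulfV ?pnatr_eq0 // scale1r.
by apply: eq_bigl => i; rewrite inE.
Qed.

Lemma cluster_weight_ge0 (l : 'I_J) : 0 <= cluster_weight l.
Proof. by rewrite divr_ge0. Qed.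

Lemma sum_cluster_weight : (0 < n)%N -> \sum_l cluster_weight l = 1.
Proof.
move=> n_gt0; rewrite -mulr_suml.
have sum_n : \sum_l #|cluster l|%:R = n%:R :> R.
  transitivity (\sum_(i < n) (1 : R)); last by rewrite sumr_const card_ord.
  by rewrite sum_over_clusters; apply: eq_bigr => l _; rewrite sumr_const.
by rewrite sum_n divff // pnatr_eq0 -lt0n.
Qed.

Lemma mean_eq_cluster_weights :
  mean q = \sum_l cluster_weight l *: cluster_mean q p l.
Proof.
rewrite /mean sum_over_clusters scaler_sumr; apply: eq_bigr => l _.
by rewrite sum_cluster scalerA mulrC.
Qed.

Lemma variance_ge0 : 0 <= variance q.
Proof. by rewrite mulr_ge0 ?invr_ge0 // sumr_ge0 // => i _; exact: sqr_ge0. Qed.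

Lemma between_cluster_variance_le :
  \sum_l cluster_weight l * sqnorm (cluster_mean q p l - mean q) <= variance q.
Proof.
rewrite /variance sum_over_clusters mulr_sumr; apply: ler_sum => l _.
rewrite /cluster_weight mulrAC mulrC ler_wpM2l ?invr_ge0 //.
under eq_bigr do rewrite enorm_sqr.
exact: card_sqnorm_sub_le (sum_cluster l).
Qed.

Lemma sqnorm_convex_sub_mean_le (lam : 'I_J -> R) (eps : R) :
  (0 < n)%N -> 0 <= eps -> \sum_l lam l = 1 ->
  (forall l, J%:R * (lam l - cluster_weight l) ^+ 2 <= eps * cluster_weight l) ->
  sqnorm (\sum_l lam l *: cluster_mean q p l - mean q) <= eps * variance q.
Proof.
move=> n_gt0 eps_ge0 sum_lam err_le.
set w := cluster_weight; set c := cluster_mean q p.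
have sum_dev : \sum_l (lam l - w l) = 0.
  by rewrite sumrB sum_lam sum_cluster_weight // subrr.
have -> : \sum_l lam l *: c l - mean q = \sum_l (lam l - w l) *: (c l - mean q).
  under [RHS]eq_bigr do rewrite scalerBr.
  rewrite sumrB -scaler_suml sum_dev scale0r subr0 mean_eq_cluster_weights.
  by under [RHS]eq_bigr do rewrite scalerBl; rewrite sumrB.
apply: le_trans (sqnorm_sum_le _) _.
apply: le_trans (ler_wpM2l eps_ge0 between_cluster_variance_le).
rewrite card_ord !mulr_sumr; apply: ler_sum => l _.
rewrite sqnormZ mulrA [X in _ <= X]mulrA.
by apply: ler_wpM2r; [exact: sqnorm_ge0 | exact: err_le].
Qed.

End Clusters.

Theorem lemma1 (R : realType) (j : nat) : (0 < j)%N ->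
  exists C : R, 0 < C /\
  forall (d : nat) (eps : R) (o : 'I_j -> 'rV[R]_d),
    0 < eps -> eps <= 1 ->
    exists G : seq 'rV[R]_d,
      (forall g, g \in G -> in_hull o g) /\
      (size G)%:R <= C * (8 * j%:R / eps) ^+ j /\
      forall (n : nat) (q : 'I_n -> 'rV[R]_d) (p : 'I_n -> 'I_j),
        injective q ->
        (forall l, exists i, p i = l) ->
        (forall l, cluster_mean q p l = o l) ->
        exists2 tau, tau \in G &
          enorm (tau - mean q) <= Num.sqrt eps * Num.sqrt (variance q).
Proof.
move=> j_gt0; set J : R := j%:R.
have J_ge1 : 1 <= J by rewrite ler1n.
exists (J ^+ j); split; first by rewrite exprn_gt0 // (lt_le_trans ltr01).
move=> d eps o eps_gt0 eps_le1.
set a := J ^+ 2 / eps; set N := (Num.truncn a).+1.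
have a_lt_N : a < N%:R := truncnS_gt a.
have JN : J ^+ 2 <= eps * N%:R by rewrite mulrC -ler_pdivrMr //; apply: ltW.
exists (simplex_grid o N); split; [|split].
- by move=> g; apply: simplex_grid_in_hull.
- apply: (@le_trans _ _ (N.+1 ^ j)%:R); first by rewrite ler_nat size_simplex_grid.
  have a_ge1 : 1 <= a by rewrite ler_pdivlMr // mul1r; nra.
  have N_le : N%:R <= a + 1 by rewrite -natr1 lerD2r truncn_le; lra.
  rewrite natrX -exprMn (_ : J * _ = 8 * a); last by rewrite /a; field; lra.
  by rewrite lerXn2r ?nnegrE -?[N.+1%:R]natr1; lra.
-
  move=> n q p _ p_surj cm_eq.
  have n_gt0 : (0 < n)%N.
    by have [i _] := p_surj (Ordinal j_gt0); apply: leq_ltn_trans (ltn_ord i).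
  have [k sum_k err_k] := simplex_rounding (cluster_weight_ge0 R p)
    (sum_cluster_weight R p n_gt0) eps_le1 JN.
  exists (\sum_l ((k l)%:R / N%:R) *: o l); first exact: mem_simplex_grid.
  have eps_ge0 := ltW eps_gt0.
  rewrite /enorm -sqrtrM // ler_sqrt; last exact: mulr_ge0 eps_ge0 (variance_ge0 q).
  rewrite (eq_bigr (fun l => (k l)%:R / N%:R *: cluster_mean q p l)) => [|l _];
    last by rewrite cm_eq.
  apply: sqnorm_convex_sub_mean_le => //.
  by rewrite -mulr_suml -natr_sum sum_k divff // pnatr_eq0 /N.
Qed.
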